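(* For the hypergeometric weights described in the context, the diagonal matrices of recursion coefficients satisfy the Toda-type system \[ \vartheta\alpha=\beta-\mathfrak a_{+}\beta,\qquad \vartheta\beta=\gamma-\mathfrak a_{+}\gamma+\beta(\mathfrak a_{-}\alpha-\alpha),\qquad \vartheta\gamma=\gamma(\mathfrak a_{-}^2\alpha-\alpha). \]
   Context: Weights on $\mathbb N_0$: $w^{(a)}(k)=\frac{(b^{(a)}_1)_k\cdots(b^{(a)}_{M^{(a)}})_k}{(c_1)_k\cdots(c_N)_k}\frac{(\eta^{(a)})^k}{k!}$, $a\in\{1,2\}$, with convergent series. Moment matrix (indices from 0): $\mathscr M_{n,2m}=\sum_k k^{n+m}w^{(1)}(k)$, $\mathscr M_{n,2m+1}=\sum_k k^{n+m}w^{(2)}(k)$, with all leading principal minors nonzero, so $\mathscr M=S^{-1}H\tilde S^{-\top}$ ($S,\tilde S$ lower unitriangular, $H$ diagonal), depending on $(\eta^{(1)},\eta^{(2)})$. With $\Lambda$ the matrix with ones on the first superdiagonal, $T=S\Lambda S^{-1}=(\Lambda^\top)^2\gamma+\Lambda^\top\beta+\alpha+\Lambda$ where $\alpha=\operatorname{diag}(\alpha_0,\alpha_1,\dots)$, $\beta=\operatorname{diag}(\beta_1,\beta_2,\dots)$, $\gamma=\operatorname{diag}(\gamma_2,\gamma_3,\dots)$ (equivalently $xB_n=B_{n+1}+\alpha_nB_n+\beta_nB_{n-1}+\gamma_nB_{n-2}$ for the entries $B_n$ of $S(1,x,x^2,\dots)^\top$). For a diagonal matrix, $\mathfrak a_-\operatorname{diag}(m_0,m_1,\dots)=\operatorname{diag}(m_1,m_2,\dots)$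 and $\mathfrak a_+\operatorname{diag}(m_0,m_1,\dots)=\operatorname{diag}(0,m_0,m_1,\dots)$. $\vartheta=\eta^{(1)}\partial/\partial\eta^{(1)}+\eta^{(2)}\partial/\partial\eta^{(2)}$. *)

From HB Require Import structures.
From mathcomp Require Import all_boot all_order all_algebra.
From mathcomp Require Import all_classical all_reals all_analysis.
Set Implicit Arguments. Unset Strict Implicit. Unset Printing Implicit Defensive.
Import Order.TTheory GRing.Theory Num.Theory.
Import numFieldNormedType.Exports.
Local Open Scope ring_scope.

Section Defs.
Variable R : realType.

Definition poch (b : R) (k : nat) : R := \prod_(i < k) (b + i%:R).

Definition hweight (bs cs : seq R) (eta : R) (k : nat) : R :=
  (\prod_(b <- bs) poch b k) / (\prod_(c <- cs) poch c k) * eta ^+ k / (k`!)%:R.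

Definition mom_term (bs cs : seq R) (eta : R) (p : nat) (k : nat) : R :=
  (k%:R) ^+ p * hweight bs cs eta k.

Definition moment (b1 b2 cs : seq R) (eta1 eta2 : R) (n j : nat) : R :=
  if odd j then limn (series (mom_term b2 cs eta2 (n + j./2)))
  else limn (series (mom_term b1 cs eta1 (n + j./2))).

Definition lead_block (A : nat -> nat -> R) (N : nat) : 'M[R]_N :=
  \matrix_(i < N, j < N) A i j.

Definition lower_unitriangular (A : nat -> nat -> R) : Prop :=
  (forall n m, (n < m)%N -> A n m = 0) /\ (forall n, A n n = 1).

(* M = S^{-1} H Stilde^{-T}, written in the equivalent finite-sum form
   S M Stilde^T = diag(H) (all sums are finite since S, Stilde are lower
   triangular). *)
Definition gauss_borel (M S St : nat -> nat -> R) (H : nat -> R) : Prop :=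
  lower_unitriangular S /\ lower_unitriangular St /\
  forall n m, \sum_(j < m.+1) \sum_(k < n.+1) S n k * M k j * St m j
              = (if n == m then H n else 0).

(* Entries of the inverse of a lower unitriangular infinite matrix, read off
   from the inverse of a leading block (the leading blocks of S^{-1} are the
   inverses of the leading blocks of S). *)
Definition tri_inv (A : nat -> nat -> R) (i j : nat) : R :=
  (invmx (lead_block A (maxn i j).+1)) (inord i) (inord j).

(* T = S Lambda S^{-1}, Lambda = ones on the first superdiagonal:
   (S Lambda)_{n,j} = S_{n,j-1}, so T_{n,m} = sum_{k<=n} S_{n,k} (S^{-1})_{k+1,m}. *)
Definition Tmat (S : nat -> nat -> R) (n m : nat) : R :=
  \sum_(k < n.+1) S n k * tri_inv S k.+1 m.

(* recursion coefficients: T = (Lambda^T)^2 gamma + Lambda^T beta + alpha + Lambda *)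
Definition rec_alpha (S : nat -> nat -> R) (n : nat) : R := Tmat S n n.
(* beta_n for n >= 1; the value 0 at n = 0 is the convention a_+ beta = diag(0,beta_1,...) *)
Definition rec_beta (S : nat -> nat -> R) (n : nat) : R :=
  if n is n'.+1 then Tmat S n n' else 0.
(* gamma_n for n >= 2; the value 0 at n = 1 is the convention a_+ gamma = diag(0,gamma_2,...) *)
Definition rec_gamma (S : nat -> nat -> R) (n : nat) : R :=
  if (n < 2)%N then 0 else Tmat S n (n - 2).

Definition theta_eq (f : R -> R -> R) (x y v : R) : Prop :=
  exists d1 d2 : R,
    is_derive x 1 (fun t => f t y) d1 /\
    is_derive y 1 (fun t => f x t) d2 /\
    x * d1 + y * d2 = v.

End Defs.

(* The Euler operator theta acts on the moments as the shift M |-> Lambda M, because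
   eta d/deta multiplies the k-th term of a hypergeometric series by k (termwise
   differentiation of power series, with the moment series convergent in a
   neighbourhood).  By Cramer's rule the entries of S and of its inverse, hence those
   of T = S Lambda S^-1, are theta-differentiable.  Differentiating S M = H St^-T,
   which is upper triangular, gives theta S = - T_- S, where T_- is the strictly lower
   part of T.  The relation M_{k,j+2} = M_{k+1,j} makes T vanish below its second
   subdiagonal, and differentiating T S = S Lambda then yields theta alpha, theta beta
   and theta gamma entry by entry. *)
From HB Require Import structures.
From mathcomp Require Import all_boot all_order all_algebra.
From mathcomp Require Import all_classical all_reals all_analysis.
From mathcomp Require Import ring lra.
Set Implicit Arguments. Unset Strict Implicit. Unset Printing Implicit Defensive.
Import Order.TTheory GRing.Theory Num.Theory.
Import numFieldNormedType.Exports.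
Local Open Scope ring_scope.

Definition theta (R : realType) (f : R -> R -> R) (x y : R) : R :=
  x * 'D_1 (fun t => f t y) x + y * 'D_1 (fun t => f x t) y.

Definition theta_derivable (R : realType) (f : R -> R -> R) (x y : R) : Prop :=
  exists v, theta_eq f x y v.

Section ThetaCalculus.
Variables (R : realType) (e1 e2 : R).
Implicit Types (f g : R -> R -> R) (v w : R).

Lemma theta_eqE f v : theta_eq f e1 e2 v -> v = theta f e1 e2.
Proof. by move=> [d1 [d2 [[_ <-] [[_ <-] <-]]]]. Qed.

Lemma theta_eq_unique f v w : theta_eq f e1 e2 v -> theta_eq f e1 e2 w -> v = w.
Proof. by move=> /theta_eqE -> /theta_eqE ->. Qed.

Lemma theta_eq_theta f : theta_derivable f e1 e2 -> theta_eq f e1 e2 (theta f e1 e2).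
Proof. by move=> [v fv]; rewrite -(theta_eqE fv). Qed.

Lemma theta_eq_cst c : theta_eq (fun _ _ => c) e1 e2 0.
Proof.
by exists 0, 0; split; [|split]; rewrite ?mulr0 ?addr0 //; exact: is_derive_cst.
Qed.

Lemma theta_eqD f g v w : theta_eq f e1 e2 v -> theta_eq g e1 e2 w ->
  theta_eq (fun x y => f x y + g x y) e1 e2 (v + w).
Proof.
move=> [d1 [d2 [f1 [f2 <-]]]] [d1' [d2' [g1 [g2 <-]]]].
exists (d1 + d1'), (d2 + d2'); split; [exact: is_deriveD|split; [exact: is_deriveD|ring]].
Qed.

Lemma theta_eqN f v : theta_eq f e1 e2 v -> theta_eq (fun x y => - f x y) e1 e2 (- v).
Proof.
move=> [d1 [d2 [f1 [f2 <-]]]].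
exists (- d1), (- d2); split; [exact: is_deriveN|split; [exact: is_deriveN|ring]].
Qed.

Lemma theta_eqM f g v w : theta_eq f e1 e2 v -> theta_eq g e1 e2 w ->
  theta_eq (fun x y => f x y * g x y) e1 e2 (f e1 e2 * w + g e1 e2 * v).
Proof.
move=> [d1 [d2 [f1 [f2 <-]]]] [d1' [d2' [g1 [g2 <-]]]].
exists (f e1 e2 * d1' + g e1 e2 * d1), (f e1 e2 * d2' + g e1 e2 * d2).
by split; [exact: is_deriveM|split; [exact: is_deriveM|ring]].
Qed.

Lemma theta_eqV f v : f e1 e2 != 0 -> theta_eq f e1 e2 v ->
  theta_eq (fun x y => (f x y)^-1) e1 e2 (- (f e1 e2) ^- 2 * v).
Proof.
move=> f0 [d1 [d2 [f1 [f2 <-]]]].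
exists (- (f e1 e2) ^- 2 *: d1), (- (f e1 e2) ^- 2 *: d2).
by split; [exact: is_deriveV|split; [exact: is_deriveV|rewrite /GRing.scale /=; ring]].
Qed.

Lemma theta_eq_sum (I : Type) (r : seq I) (P : pred I) (F : I -> R -> R -> R) dF :
  (forall i, theta_eq (F i) e1 e2 (dF i)) ->
  theta_eq (fun x y => \sum_(i <- r | P i) F i x y) e1 e2 (\sum_(i <- r | P i) dF i).
Proof.
move=> FdF; elim: r => [|a r IHr].
  rewrite big_nil; under eq2_fun do rewrite big_nil; exact: theta_eq_cst.
rewrite big_cons; under eq2_fun do rewrite big_cons.
by case: (P a) => //; exact: theta_eqD.
Qed.

Lemma theta_derivable_cst c : theta_derivable (fun _ _ => c) e1 e2.
Proof. by eexists; exact: theta_eq_cst. Qed.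

Lemma theta_derivableN f : theta_derivable f e1 e2 ->
  theta_derivable (fun x y => - f x y) e1 e2.
Proof. by move=> [v fv]; eexists; exact: theta_eqN fv. Qed.

Lemma theta_derivableM f g : theta_derivable f e1 e2 -> theta_derivable g e1 e2 ->
  theta_derivable (fun x y => f x y * g x y) e1 e2.
Proof. by move=> [v fv] [w gw]; eexists; exact: theta_eqM fv gw. Qed.

Lemma theta_derivableV f : f e1 e2 != 0 -> theta_derivable f e1 e2 ->
  theta_derivable (fun x y => (f x y)^-1) e1 e2.
Proof. by move=> f0 [v fv]; eexists; exact: theta_eqV fv. Qed.

Lemma theta_derivable_sum (I : Type) (r : seq I) (P : pred I) (F : I -> R -> R -> R) :
  (forall i, theta_derivable (F i) e1 e2) ->
  theta_derivable (fun x y => \sum_(i <- r | P i) F i x y) e1 e2.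
Proof.
by move=> dF; eexists; apply: theta_eq_sum => i; exact: theta_eq_theta.
Qed.

Lemma theta_derivable_prod (I : Type) (r : seq I) (P : pred I) (F : I -> R -> R -> R) :
  (forall i, theta_derivable (F i) e1 e2) ->
  theta_derivable (fun x y => \prod_(i <- r | P i) F i x y) e1 e2.
Proof.
move=> dF; elim: r => [|a r IHr].
  under eq2_fun do rewrite big_nil; exact: theta_derivable_cst.
under eq2_fun do rewrite big_cons.
by case: (P a) => //; exact: theta_derivableM.
Qed.

End ThetaCalculus.

Section ThetaLocal.
Variables (R : realType) (U : set (R * R)) (e1 e2 : R).
Hypotheses (U_open : open U) (U_e : U (e1, e2)).
Implicit Types (f g : R -> R -> R) (v : R).
Local Open Scope classical_set_scope.

Lemma open_near_fst : \forall t \near e1, U (t, e2).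
Proof.
have : (fun t => (t, e2)) @ e1 --> (e1, e2) := cvg_pair cvg_id (cvg_cst e2).
by apply; exact: U_open.
Qed.

Lemma open_near_snd : \forall t \near e2, U (e1, t).
Proof.
have : (fun t => (e1, t)) @ e2 --> (e1, e2) := cvg_pair (cvg_cst e1) cvg_id.
by apply; exact: U_open.
Qed.

Lemma theta_eq_open_ext f g v : (forall x y, U (x, y) -> f x y = g x y) ->
  theta_eq f e1 e2 v -> theta_eq g e1 e2 v.
Proof.
move=> fg [d1 [d2 [f1 [f2 <-]]]]; exists d1, d2; split; [|split] => //.
  apply: near_eq_is_derive f1; near=> t; apply: fg; near: t; exact: open_near_fst.
apply: near_eq_is_derive f2; near=> t; apply: fg; near: t; exact: open_near_snd.
Unshelve. all: by end_near.
Qed.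

Lemma theta_derivable_open_ext f g : (forall x y, U (x, y) -> f x y = g x y) ->
  theta_derivable f e1 e2 -> theta_derivable g e1 e2.
Proof. by move=> fg [v fv]; exists v; exact: theta_eq_open_ext fv. Qed.

Lemma theta_derivable_det N (A : R -> R -> 'M[R]_N) :
  (forall i j, theta_derivable (fun x y => A x y i j) e1 e2) ->
  theta_derivable (fun x y => \det (A x y)) e1 e2.
Proof.
move=> dA; apply: theta_derivable_sum => s.
apply: theta_derivableM; first exact: theta_derivable_cst.
by apply: theta_derivable_prod => i; exact: dA.
Qed.

Lemma theta_derivable_invmx N (A : R -> R -> 'M[R]_N) :
  (forall x y, U (x, y) -> A x y \in unitmx) ->
  (forall i j, theta_derivable (fun x y => A x y i j) e1 e2) ->
  forall i j, theta_derivable (fun x y => invmx (A x y) i j) e1 e2.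
Proof.
move=> A_unit dA i j.
apply: (@theta_derivable_open_ext (fun x y => (\det (A x y))^-1 *
   ((-1) ^+ (j + i) * \det (row' j (col' i (A x y)))))).
  by move=> x y Uxy; rewrite /invmx A_unit // !mxE.
apply: theta_derivableM.
  apply: theta_derivableV; last exact: theta_derivable_det.
  by rewrite -unitfE -unitmxE A_unit.
apply: theta_derivableM; first exact: theta_derivable_cst.
by apply: theta_derivable_det => k l; under eq2_fun do rewrite !mxE; exact: dA.
Qed.

End ThetaLocal.

Section EulerOperatorPseries.
Variable R : realType.
Implicit Types (c : R^nat) (x K : R).
Local Open Scope classical_set_scope.

Lemma pseries_diffsMl c x n :
  x * pseries (pseries_diffs c) x n = pseries (fun k => k%:R * c k) x n.+1.
Proof.
rewrite /pseries !seriesEord /= big_ord_recl /= !mul0r add0r mulr_sumr.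
by apply: eq_bigr => i _; rewrite /pseries_diffs /bump add1n exprS; ring.
Qed.

Lemma is_cvg_pseries_diffs c K : K != 0 ->
  cvgn (pseries (fun k => k%:R * c k) K) -> cvgn (pseries (pseries_diffs c) K).
Proof.
move=> K0 ckK.
have -> : pseries (pseries_diffs c) K =
    (fun n => K^-1 * pseries (fun k => k%:R * c k) K n.+1).
  by apply/funext => n; rewrite -pseries_diffsMl mulKf.
by apply: is_cvgMl_tmp; apply/cvg_ex; eexists; rewrite cvg_shiftS; exact: ckK.
Qed.

Lemma lim_pseries_diffsMl c x : cvgn (pseries (pseries_diffs c) x) ->
  x * limn (pseries (pseries_diffs c) x) = limn (pseries (fun k => k%:R * c k) x).
Proof.
move=> cvg_diffs; symmetry; apply: (cvg_lim (@Rhausdorff R)).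
rewrite -cvg_shiftS; under eq_fun do rewrite -pseries_diffsMl.
exact: cvgMl_tmp.
Qed.

Lemma is_derive_pseries c K x : `|x| < `|K| ->
  cvgn (pseries c K) -> cvgn (pseries (fun k => k%:R * c k) K) ->
  cvgn (pseries (fun k => k%:R ^+ 2 * c k) K) ->
  is_derive x 1 (fun t => limn (pseries c t)) (limn (pseries (pseries_diffs c) x)).
Proof.
move=> xK cK ckK ck2K.
have K0 : K != 0 by rewrite -normr_gt0 (le_lt_trans _ xK).
apply: (pseries_snd_diffs cK (is_cvg_pseries_diffs K0 ckK) _ xK).
apply: (is_cvg_pseries_diffs K0).
have -> : (fun k => k%:R * pseries_diffs c k) = pseries_diffs (fun k => k.-1%:R * c k).
  by apply/funext => k; rewrite /pseries_diffs /=; ring.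
apply: (is_cvg_pseries_diffs K0) => /=.
have -> : pseries (fun k => k%:R * (k.-1%:R * c k)) K =
    series ((fun k => k%:R ^+ 2 * c k * K ^+ k) - (fun k => k%:R * c k * K ^+ k)).
  congr series; apply/funext => -[|k]; rewrite !fctE /=; first ring.
  by rewrite -[k.+1]addn1 natrD; ring.
exact: is_cvg_seriesB.
Qed.

Lemma euler_pseries c K x : `|x| < `|K| ->
  (forall q, cvgn (pseries (fun k => k%:R ^+ q * c k) K)) ->
  exists2 d, is_derive x 1 (fun t => limn (pseries c t)) d &
             x * d = limn (pseries (fun k => k%:R * c k) x).
Proof.
move=> xK cK.
have K0 : K != 0 by rewrite -normr_gt0 (le_lt_trans _ xK).
have cK0 := cK 0%N.
have c0 : (fun k => k%:R ^+ 0 * c k) = c by apply/funext => k; rewrite mul1r.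
rewrite c0 in cK0.
have ckK : cvgn (pseries (fun k => k%:R * c k) K) by exact: (cK 1%N).
exists (limn (pseries (pseries_diffs c) x)).
  exact: is_derive_pseries xK cK0 ckK (cK 2%N).
apply: lim_pseries_diffsMl; apply: is_cvg_pseries_inside xK.
exact: is_cvg_pseries_diffs.
Qed.

End EulerOperatorPseries.

Section HypergeometricMoments.
Variables (R : realType) (bs cs : seq R).

Definition hyp_coef (k : nat) : R :=
  (\prod_(b <- bs) poch b k) / (\prod_(c <- cs) poch c k) / (k`!)%:R.

Lemma series_mom_term eta p :
  series (mom_term bs cs eta p) = pseries (fun k => k%:R ^+ p * hyp_coef k) eta.
Proof.
rewrite /pseries; congr series; apply/funext => k.
by rewrite /mom_term /hweight /hyp_coef /=; ring.
Qed.

Lemma euler_mom_term (p : nat) (x K : R) : `|x| < `|K| ->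
  (forall q, cvgn (series (mom_term bs cs K q))) ->
  exists2 d, is_derive x 1 (fun t => limn (series (mom_term bs cs t p))) d &
             x * d = limn (series (mom_term bs cs x p.+1)).
Proof.
move=> xK cK; rewrite series_mom_term.
have -> : (fun t => limn (series (mom_term bs cs t p))) =
    (fun t => limn (pseries (fun k => k%:R ^+ p * hyp_coef k) t)).
  by apply/funext => t; rewrite series_mom_term.
have -> : (fun k => k%:R ^+ p.+1 * hyp_coef k) =
    (fun k => k%:R * (k%:R ^+ p * hyp_coef k)) by apply/funext => k; rewrite exprS mulrA.
apply: euler_pseries xK _ => q.
have -> : (fun k => k%:R ^+ q * (k%:R ^+ p * hyp_coef k)) =
    (fun k => k%:R ^+ (q + p) * hyp_coef k) by apply/funext => k; rewrite exprD mulrA.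
by rewrite -series_mom_term.
Qed.

End HypergeometricMoments.

Lemma near_larger_norm (R : realType) (P : R -> Prop) (z : R) :
  (\forall t \near z, P t) -> exists2 K, P K & `|z| < `|K|.
Proof.
move=> /nbhs_ballP[d d0 zdP].
have [K zK dK] : exists2 K, `|z - K| < d & `|z| < `|K|.
  have d20 : 0 < d / 2 by rewrite divr_gt0.
  case: (lerP 0 z) => z0; [exists (z + d / 2) | exists (z - d / 2)].
  - by rewrite opprD addNKr normrN gtr0_norm ?gtr_pMr ?invf_lt1 ?ltr1n.
  - by rewrite !ger0_norm ?ltrDl // addr_ge0 // ltW.
  - by rewrite opprB addrC subrK gtr0_norm ?gtr_pMr ?invf_lt1 ?ltr1n.
  - by rewrite !ltr0_norm ?ltrN2 ?gtrBl // subr_lt0 (lt_trans z0).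
by exists K => //; apply: zdP; rewrite /ball /= zK.
Qed.

Lemma sum_ord_narrow (V : nmodType) (n m : nat) (F : nat -> V) : (n <= m)%N ->
  (forall k, (n <= k < m)%N -> F k = 0) -> \sum_(k < m) F k = \sum_(k < n) F k.
Proof.
move=> nm F0; rewrite -!(big_mkord xpredT) (@big_cat_nat _ _ _ n 0 m) //=.
by rewrite [X in _ + X]big1_seq ?addr0 // => k /andP[_]; rewrite mem_index_iota => /F0.
Qed.

Lemma sum_ord_mul_delta (R : pzSemiRingType) (n j : nat) (F : nat -> R) :
  \sum_(k < n) F k * (k == j :> nat)%:R = if (j < n)%N then F j else 0.
Proof.
case: ltnP => [jn|nj].
  rewrite (bigD1 (Ordinal jn)) //= eqxx mulr1 big1 ?addr0 // => k.
  by rewrite -val_eqE /= => /negbTE ->; rewrite mulr0.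
by rewrite big1 // => k _; rewrite (ltn_eqF (leq_trans (ltn_ord k) nj)) mulr0.
Qed.

Section UnitriangularInverse.
Variables (F : fieldType) (n : nat) (A : 'M[F]_n).
Hypotheses (A_trig : is_trig_mx A) (A_diag : forall i, A i i = 1).

Lemma unitriangular_unitmx : A \in unitmx.
Proof. by rewrite unitmxE det_trig // big1 ?unitr1. Qed.

Let A_invmx : A *m invmx A = 1%:M.
Proof. by rewrite mulmxV // unitriangular_unitmx. Qed.

Lemma invmx_unitriangular_trig : is_trig_mx (invmx A).
Proof.
apply/is_trig_mxP; suff Y0 k (i j : 'I_n) : val i = k -> (i < j)%N -> invmx A i j = 0.
  by move=> i j; exact: Y0.
elim/ltn_ind: k i j => k IH i j ik ij.
have := congr1 (fun B : 'M[F]_n => B i j) A_invmx.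
rewrite !mxE (bigD1 i) //= A_diag mul1r.
rewrite -val_eqE /= (ltn_eqF ij) big1 ?addr0 // => l /negbTE li.
case: (ltngtP l i) => [lti|gti|/val_inj lEi]; last by rewrite lEi eqxx in li.
  by rewrite (IH l) ?mulr0 // -?ik // (ltn_trans lti).
by move/is_trig_mxP: A_trig => ->; rewrite ?mul0r.
Qed.

Lemma invmx_unitriangular_diag i : invmx A i i = 1.
Proof.
have := congr1 (fun B : 'M[F]_n => B i i) A_invmx.
rewrite !mxE (bigD1 i) //= A_diag mul1r eqxx.
rewrite big1 ?addr0 // => l /negbTE li.
case: (ltngtP l i) => [lti|gti|/val_inj lEi]; last by rewrite lEi eqxx in li.
  by move/is_trig_mxP: invmx_unitriangular_trig => ->; rewrite ?mulr0.
by move/is_trig_mxP: A_trig => ->; rewrite ?mul0r.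
Qed.

End UnitriangularInverse.

Section LowerUnitriangular.
Variables (R : realType) (s : nat -> nat -> R).
Hypothesis s_lower : lower_unitriangular s.

Lemma lead_block_trig N : is_trig_mx (lead_block s N).
Proof. by apply/is_trig_mxP => i j ij; rewrite mxE s_lower.1. Qed.

Lemma lead_block_diag N i : lead_block s N i i = 1.
Proof. by rewrite mxE s_lower.2. Qed.

Lemma lead_block_unitmx N : lead_block s N \in unitmx.
Proof. exact: unitriangular_unitmx (lead_block_trig N) (@lead_block_diag N). Qed.

Lemma tri_inv_lower i j : (i < j)%N -> tri_inv s i j = 0.
Proof.
move=> ij; rewrite /tri_inv; have /is_trig_mxP -> // :=
  invmx_unitriangular_trig (lead_block_trig (maxn i j).+1) (@lead_block_diag _).
by rewrite !inordK // ltnS ?leq_maxl ?leq_maxr.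
Qed.

Lemma tri_inv_diag i : tri_inv s i i = 1.
Proof. exact: invmx_unitriangular_diag (lead_block_trig _) (@lead_block_diag _) _. Qed.

Lemma tri_inv_mul i j : \sum_(m < i.+1) tri_inv s i m * s m j = (i == j)%:R.
Proof.
case: (leqP j i) => ji; last first.
  rewrite (ltn_eqF ji) big1 // => m _.
  by rewrite s_lower.1 ?mulr0 // (leq_ltn_trans _ ji) // -ltnS.
have := congr1 (fun B : 'M[R]_i.+1 => B (inord i) (inord j))
  (mulVmx (lead_block_unitmx i.+1)).
rewrite !mxE -val_eqE /= !inordK // => <-.
apply: eq_bigr => m _; rewrite /tri_inv mxE inordK //.
by rewrite (maxn_idPl (_ : m <= i)%N) ?inord_val // -ltnS.
Qed.

Lemma Tmat_superdiag n : Tmat s n n.+1 = 1.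
Proof.
rewrite /Tmat big_ord_recr /= s_lower.2 tri_inv_diag mulr1 big1 ?add0r // => k _.
by rewrite tri_inv_lower ?mulr0 // ltnS ltn_ord.
Qed.

Lemma Tmat_mul n j :
  \sum_(m < n.+2) Tmat s n m * s m j = if j is j'.+1 then s n j' else 0.
Proof.
rewrite /Tmat; under eq_bigr do rewrite mulr_suml.
rewrite exchange_big /=.
transitivity (\sum_(k < n.+1) s n k * (k.+1 == j :> nat)%:R).
  apply: eq_bigr => k _; rewrite -tri_inv_mul mulr_sumr.
  rewrite (@sum_ord_narrow _ k.+2 n.+2 (fun m => s n k * tri_inv s k.+1 m * s m j)).
  - by apply: eq_bigr => m _; rewrite mulrA.
  - by rewrite ltnS ltn_ord.
  - by move=> m /andP[km _]; rewrite tri_inv_lower ?mulr0 ?mul0r.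
case: j => [|j]; first by rewrite big1 // => k _; rewrite mulr0.
under eq_bigr do rewrite eqSS.
by rewrite sum_ord_mul_delta; case: ltnP => // nj; rewrite s_lower.1.
Qed.

End LowerUnitriangular.

Lemma lead_block_lker0 (R : realType) (A : nat -> nat -> R) (c : nat -> R) N :
  \det (lead_block A N) != 0 ->
  (forall j, (j < N)%N -> \sum_(k < N) c k * A k j = 0) ->
  forall k, (k < N)%N -> c k = 0.
Proof.
move=> A_det cA0 k kN.
have A_unit : lead_block A N \in unitmx by rewrite unitmxE unitfE.
pose v : 'rV[R]_N := \row_(i < N) c i.
have vA0 : v *m lead_block A N = 0.
  by apply/rowP => j; rewrite !mxE -[RHS](cA0 j) //; apply: eq_bigr => i _; rewrite !mxE.
have : v = 0 by rewrite -(mulmxK A_unit v) vA0 mul0mx.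
by move/rowP/(_ (Ordinal kN)); rewrite !mxE.
Qed.

Section GaussBorel.
Variables (R : realType) (M S St : nat -> nat -> R) (H : nat -> R).
Hypothesis gb : gauss_borel M S St H.

Lemma gauss_borel_upper n j : (j < n)%N -> \sum_(k < n.+1) S n k * M k j = 0.
Proof.
have [_ [[_ St_diag] gbE]] := gb.
elim/ltn_ind: j => j IH jn; have := gbE n j; rewrite eq_sym (ltn_eqF jn).
under eq_bigr do rewrite -mulr_suml.
rewrite big_ord_recr /= St_diag mulr1 big1 ?add0r // => i _.
by rewrite IH ?mul0r // (ltn_trans _ jn).
Qed.

Lemma gauss_borel_entry n k (kn : (k < n)%N) : \det (lead_block M n) != 0 ->
  S n k = - \sum_(i < n) M n i * invmx (lead_block M n) i (Ordinal kn).
Proof.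
move=> M_det; have [[_ S_diag] _] := gb.
have M_unit : lead_block M n \in unitmx by rewrite unitmxE unitfE.
pose r : 'rV[R]_n := \row_(i < n) S n i.
pose m : 'rV[R]_n := \row_(i < n) M n i.
have rM : r *m lead_block M n = - m.
  apply/rowP => j; rewrite !mxE.
  have /eqP := gauss_borel_upper (ltn_ord j).
  rewrite big_ord_recr /= S_diag mul1r addr_eq0 => /eqP <-.
  by apply: eq_bigr => i _; rewrite !mxE.
have /rowP/(_ (Ordinal kn)) : r = - m *m invmx (lead_block M n) by rewrite -rM mulmxK.
rewrite !mxE => ->; rewrite -sumrN; by apply: eq_bigr => i _; rewrite !mxE mulNr.
Qed.

End GaussBorel.

Lemma sum_ord_from (V : nmodType) (n k : nat) (F : nat -> V) :
  (forall m, (m < n)%N -> F m = 0) -> \sum_(m < n + k) F m = \sum_(i < k) F (n + i)%N.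
Proof. by move=> F0; rewrite big_split_ord /= big1 ?add0r // => i _; exact: F0. Qed.

Lemma sum_ord_from2 (V : nmodType) (n : nat) (F : nat -> V) :
  (forall m, (m < n)%N -> F m = 0) -> \sum_(m < n.+2) F m = F n + F n.+1.
Proof.
by move=> F0; rewrite -addn2 sum_ord_from // !big_ord_recr big_ord0 /= add0r addn0 addn1.
Qed.

Lemma sum_ord_from3 (V : nmodType) (n : nat) (F : nat -> V) :
  (forall m, (m < n)%N -> F m = 0) -> \sum_(m < n.+3) F m = F n + F n.+1 + F n.+2.
Proof.
move=> F0; rewrite -addn3 sum_ord_from // !big_ord_recr big_ord0 /= add0r.
by rewrite addn0 addn1 addn2.
Qed.

Lemma sum_ord_from4 (V : nmodType) (n : nat) (F : nat -> V) :
  (forall m, (m < n)%N -> F m = 0) ->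
  \sum_(m < n.+4) F m = F n + F n.+1 + F n.+2 + F n.+3.
Proof.
move=> F0; rewrite -addn4 sum_ord_from // !big_ord_recr big_ord0 /= add0r.
by rewrite addn0 addn1 addn2 addn3.
Qed.

(* [dS] and [dT] stand for theta S and theta T: [dS_M_upper] is theta applied to the
   upper triangularity of S M, using theta M = Lambda M, and [dT_S] is theta applied
   to T S = S Lambda ([Tmat_mul]). *)
Section TodaAlgebra.
Variable R : realType.
Variables (s M dS dT : nat -> nat -> R).
Hypotheses (s_lower : lower_unitriangular s)
  (sM_upper : forall n j, (j < n)%N -> \sum_(k < n.+1) s n k * M k j = 0)
  (M_shift : forall k j, M k j.+2 = M k.+1 j)
  (M_det : forall N, \det (lead_block M N) != 0)
  (dS_upper : forall n k, (n <= k)%N -> dS n k = 0)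
  (dS_M_upper : forall n j, (j < n)%N ->
     \sum_(k < n.+1) (s n k * M k.+1 j + M k j * dS n k) = 0)
  (dT_S : forall n j, \sum_(m < n.+2) (Tmat s n m * dS m j + s m j * dT n m) =
     if j is j'.+1 then dS n j' else 0)
  (dT_superdiag : forall n, dT n n.+1 = 0).

Local Notation T := (Tmat s).
Let sM m j := \sum_(k < m.+1) s m k * M k j.

Lemma sum_mul_sM (c : nat -> R) N j :
  \sum_(k < N) (\sum_(m < N) c m * s m k) * M k j = \sum_(m < N) c m * sM m j.
Proof.
under eq_bigr do rewrite mulr_suml.
rewrite exchange_big /=; apply: eq_bigr => m _.
rewrite mulr_sumr (@sum_ord_narrow _ m.+1 N (fun k => c m * s m k * M k j)) //.
  by apply: eq_bigr => k _; rewrite mulrA.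
by move=> k /andP[mk _]; rewrite s_lower.1 ?mulr0 ?mul0r.
Qed.

Lemma sM_shift n j : \sum_(k < n.+1) s n k * M k.+1 j = \sum_(m < n.+2) T n m * sM m j.
Proof.
transitivity (\sum_(k < n.+2) (\sum_(m < n.+2) T n m * s m k) * M k j).
  rewrite [RHS]big_ord_recl (Tmat_mul s_lower) mul0r add0r.
  by apply: eq_bigr => k _; rewrite (Tmat_mul s_lower).
exact: sum_mul_sM.
Qed.

(* Row n of T S M is row n of S M shifted by two columns ([M_shift]), so it vanishes
   left of column n - 2; both leading blocks of S and M being invertible, so does
   row n of T. *)
Lemma Tmat_band n p : (p.+3 <= n)%N -> T n p = 0.
Proof.
move=> pn; have [N nE] : exists N, n = N.+2 by exists n.-2; case: n pn => [|[|n]].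
subst n; have pN : (p < N)%N by rewrite -2!ltnS.
have s_det : \det (lead_block s N) != 0.
  by rewrite -unitfE -unitmxE (lead_block_unitmx s_lower).
move: p pN {pn}; apply: (lead_block_lker0 (c := T N.+2) s_det) => k kN.
move: k kN; apply: (lead_block_lker0 (M_det N)
  (c := fun k => \sum_(m < N) T N.+2 m * s m k)) => j jN.
rewrite sum_mul_sM -(@sum_ord_narrow _ N N.+4 (fun m => T N.+2 m * sM m j)).
- rewrite -sM_shift; under eq_bigr do rewrite -M_shift.
  by apply: sM_upper; rewrite !ltnS.
- by rewrite -addn4 leq_addr.
- by move=> m /andP[Nm _]; rewrite /sM sM_upper ?mulr0 // (leq_trans jN).
Qed.

(* theta S = - T_- S with T_- the strictly lower part of T: the lower part of
   theta S M + S Lambda M = theta (S M) vanishes. *)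
Lemma dS_E n k : dS n k = - \sum_(m < n) T n m * s m k.
Proof.
case: (ltnP k n) => kn; last first.
  rewrite dS_upper // big1 ?oppr0 // => m _.
  by rewrite s_lower.1 ?mulr0 // (leq_trans _ kn).
apply/eqP; rewrite -addr_eq0; apply/eqP; move: k kn; apply: (lead_block_lker0 (M_det n)).
move=> j jn; under eq_bigr do rewrite mulrDl.
rewrite big_split /= sum_mul_sM.
have narrow : \sum_(m < n.+2) T n m * sM m j = \sum_(m < n) T n m * sM m j.
  apply: (@sum_ord_narrow _ n n.+2 (fun m => T n m * sM m j)) => [|m /andP[nm _]].
    by rewrite -addn2 leq_addr.
  by rewrite /sM sM_upper ?mulr0 // (leq_trans jn).
have := dS_M_upper jn; rewrite big_split /= sM_shift narrow.
rewrite big_ord_recr /= dS_upper // mulr0 addr0 addrC => dSM0.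
by rewrite -[RHS]dSM0; congr (_ + _); apply: eq_bigr => i _; rewrite mulrC.
Qed.

Lemma dS_sub1 n : dS n.+1 n = - T n.+1 n.
Proof.
rewrite dS_E big_ord_recr /= s_lower.2 mulr1 big1 ?add0r // => m _.
by rewrite s_lower.1 ?mulr0.
Qed.

Lemma dS_sub2 n : dS n.+2 n = - (T n.+2 n + T n.+2 n.+1 * s n.+1 n).
Proof.
rewrite dS_E (@sum_ord_from2 _ _ (fun m => T n.+2 m * s m n)) ?s_lower.2 ?mulr1 //.
by move=> m mn; rewrite s_lower.1 ?mulr0.
Qed.

Lemma dS_sub3 n : dS n.+3 n = - (T n.+3 n.+1 * s n.+1 n + T n.+3 n.+2 * s n.+2 n).
Proof.
rewrite dS_E (@sum_ord_from3 _ _ (fun m => T n.+3 m * s m n)).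
  by rewrite Tmat_band // mul0r add0r.
by move=> m mn; rewrite s_lower.1 ?mulr0.
Qed.

Lemma Tmat_mul_diag n : T n n + s n.+1 n = if n is n'.+1 then s n n' else 0.
Proof.
rewrite -(Tmat_mul s_lower) (@sum_ord_from2 _ _ (fun m => T n m * s m n)).
  by rewrite s_lower.2 mulr1 (Tmat_superdiag s_lower) mul1r.
by move=> m mn; rewrite s_lower.1 ?mulr0.
Qed.

Lemma Tmat_mul_sub1 n :
  T n.+1 n + T n.+1 n.+1 * s n.+1 n + s n.+2 n = if n is n'.+1 then s n.+1 n' else 0.
Proof.
rewrite -(Tmat_mul s_lower) (@sum_ord_from3 _ _ (fun m => T n.+1 m * s m n)).
  by rewrite s_lower.2 mulr1 (Tmat_superdiag s_lower) mul1r.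
by move=> m mn; rewrite s_lower.1 ?mulr0.
Qed.

Let dT_S_term n j m := T n m * dS m j + s m j * dT n m.

Let dT_S_term0 n j m : (m < j)%N -> dT_S_term n j m = 0.
Proof.
by move=> mj; rewrite /dT_S_term dS_upper ?(ltnW mj) // s_lower.1 // mulr0 mul0r addr0.
Qed.

Lemma dT_diag n : dT n n = T n.+1 n - (if n is n'.+1 then T n n' else 0).
Proof.
have := dT_S n n; rewrite (sum_ord_from2 (@dT_S_term0 n n)) /dT_S_term.
rewrite dS_upper // s_lower.2 (Tmat_superdiag s_lower) dT_superdiag dS_sub1.
by case: n => [|n]; rewrite ?dS_sub1; lra.
Qed.

(* [lra] treats products as atoms, so the relations [Tmat_mul_diag] and
   [Tmat_mul_sub1] are substituted by hand where they occur inside products. *)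
Lemma dT_sub1 n : dT n.+1 n = T n.+2 n - (if n is n'.+1 then T n.+1 n' else 0)
  + T n.+1 n * (T n.+1 n.+1 - T n n).
Proof.
have := dT_S n.+1 n; rewrite (sum_ord_from3 (@dT_S_term0 n.+1 n)) /dT_S_term.
rewrite dS_upper // s_lower.2 (Tmat_superdiag s_lower) dT_superdiag.
rewrite dS_sub1 dS_sub2 dT_diag /=.
have := Tmat_mul_diag n.
case: n => [|n] /= STdiag dTS; first by rewrite (_ : T 0%N 0%N = - s 1%N 0%N); lra.
rewrite dS_sub2 in dTS.
by rewrite (_ : T n.+1 n.+1 = s n.+1 n - s n.+2 n.+1); lra.
Qed.

Lemma dT_sub2 n : dT n.+2 n = T n.+2 n * (T n.+2 n.+2 - T n n).
Proof.
have := dT_S n.+2 n; rewrite (sum_ord_from4 (@dT_S_term0 n.+2 n)) /dT_S_term.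
rewrite dS_upper // s_lower.2 (Tmat_superdiag s_lower) dT_superdiag.
rewrite dS_sub1 dS_sub2 dS_sub3.
rewrite dT_diag dT_sub1 /=.
have := Tmat_mul_diag n; have := Tmat_mul_sub1 n.
case: n => [|n] /= STsub1 STdiag dTS.
  rewrite (_ : T 0%N 0%N = - s 1%N 0%N); last by lra.
  by rewrite (_ : s 2%N 0%N = - T 1%N 0%N - T 1%N 1%N * s 1%N 0%N) in dTS; lra.
rewrite dS_sub3 in dTS.
rewrite (_ : T n.+1 n.+1 = s n.+1 n - s n.+2 n.+1); last by lra.
by rewrite (_ : s n.+3 n.+1 = s n.+2 n - T n.+2 n.+1 - T n.+2 n.+2 * s n.+2 n.+1) in dTS;
  lra.
Qed.

End TodaAlgebra.

Lemma rec_gammaSS (R : realType) (S : nat -> nat -> R) n :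
  rec_gamma S n.+2 = Tmat S n.+2 n.
Proof. by rewrite /rec_gamma /= subn2. Qed.

Section TodaFlow.
Variables (R : realType) (b1 b2 cs : seq R) (U : set (R * R)).
Variables (Sm St : R -> R -> nat -> nat -> R) (H : R -> R -> nat -> R).
Hypotheses (U_open : open U)
  (mom_cvg : forall e1 e2, U (e1, e2) -> forall p : nat,
     cvgn (series (mom_term b1 cs e1 p)) /\ cvgn (series (mom_term b2 cs e2 p)))
  (mom_det : forall e1 e2, U (e1, e2) -> forall N : nat,
     \det (lead_block (moment b1 b2 cs e1 e2) N) != 0)
  (mom_gb : forall e1 e2, U (e1, e2) ->
     gauss_borel (moment b1 b2 cs e1 e2) (Sm e1 e2) (St e1 e2) (H e1 e2)).
Variables (e1 e2 : R).
Hypothesis U_e : U (e1, e2).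

Local Notation M x y := (moment b1 b2 cs x y).

Lemma theta_moment i j : theta_eq (fun x y => M x y i j) e1 e2 (M e1 e2 i.+1 j).
Proof.
rewrite /moment addSn; case: (odd j).
  have [K UK e2K] := near_larger_norm (open_near_snd U_open U_e).
  have [d d_der d_val] := euler_mom_term (i + j./2) e2K (fun q => (mom_cvg UK q).2).
  by exists 0, d; rewrite mulr0 add0r; split => //; exact: is_derive_cst.
have [K UK e1K] := near_larger_norm (open_near_fst U_open U_e).
have [d d_der d_val] := euler_mom_term (i + j./2) e1K (fun q => (mom_cvg UK q).1).
by exists d, 0; rewrite mulr0 addr0; split => //; split => //; exact: is_derive_cst.
Qed.

Lemma Sm_upper p k x y : U (x, y) -> (p <= k)%N -> Sm x y p k = (k == p)%:R.
Proof.
move=> Uxy pk; have [S_up S_diag] := (mom_gb Uxy).1.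
by case: eqP => [->|/eqP kp]; [rewrite S_diag | rewrite S_up // ltn_neqAle eq_sym kp].
Qed.

Lemma theta_derivable_S p k : theta_derivable (fun x y => Sm x y p k) e1 e2.
Proof.
case: (ltnP k p) => kp; last first.
  apply: (theta_derivable_open_ext U_open U_e (f := fun _ _ => (k == p)%:R)).
    by move=> x y Uxy; rewrite Sm_upper.
  exact: theta_derivable_cst.
apply: (theta_derivable_open_ext U_open U_e (f := fun x y =>
  - \sum_(i < p) M x y p i * invmx (lead_block (M x y) p) i (Ordinal kp))).
  by move=> x y Uxy; rewrite (gauss_borel_entry (mom_gb Uxy) kp (mom_det Uxy p)).
apply/theta_derivableN/theta_derivable_sum => i.
apply: theta_derivableM; first by eexists; exact: theta_moment.
apply: (theta_derivable_invmx U_open U_e (A := fun x y => lead_block (M x y) p)).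
  by move=> x y Uxy; rewrite unitmxE unitfE mom_det.
by move=> i' j'; under eq2_fun do rewrite mxE; eexists; exact: theta_moment.
Qed.

Lemma theta_derivable_T p m : theta_derivable (fun x y => Tmat (Sm x y) p m) e1 e2.
Proof.
apply: theta_derivable_sum => k; apply: theta_derivableM; first exact: theta_derivable_S.
apply: (theta_derivable_invmx U_open U_e
  (A := fun x y => lead_block (Sm x y) (maxn k.+1 m).+1)).
  by move=> x y Uxy; apply: lead_block_unitmx; exact: (mom_gb Uxy).1.
move=> i j; rewrite /lead_block; under eq2_fun do rewrite mxE.
exact: theta_derivable_S.
Qed.

Local Notation s := (Sm e1 e2).
Local Notation dS p k := (theta (fun x y => Sm x y p k) e1 e2).
Local Notation dT p m := (theta (fun x y => Tmat (Sm x y) p m) e1 e2).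

Lemma theta_S_upper p k : (p <= k)%N -> dS p k = 0.
Proof.
move=> pk; apply/esym/theta_eqE.
apply: (theta_eq_open_ext U_open U_e (f := fun _ _ => (k == p)%:R)).
  by move=> x y Uxy; rewrite Sm_upper.
exact: theta_eq_cst.
Qed.

Lemma theta_SM_upper p j : (j < p)%N ->
  \sum_(k < p.+1) (s p k * M e1 e2 k.+1 j + M e1 e2 k j * dS p k) = 0.
Proof.
move=> jp.
apply: (@theta_eq_unique _ _ _ (fun x y => \sum_(k < p.+1) Sm x y p k * M x y k j)).
  apply: theta_eq_sum => k; apply: theta_eqM; last exact: theta_moment.
  exact/theta_eq_theta/theta_derivable_S.
apply: (theta_eq_open_ext U_open U_e (f := fun _ _ => 0)); last exact: theta_eq_cst.
by move=> x y Uxy; rewrite (gauss_borel_upper (mom_gb Uxy)).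
Qed.

Lemma theta_TS p j : \sum_(m < p.+2) (Tmat s p m * dS m j + s m j * dT p m) =
  if j is j'.+1 then dS p j' else 0.
Proof.
apply: (@theta_eq_unique _ _ _
  (fun x y => \sum_(m < p.+2) Tmat (Sm x y) p m * Sm x y m j)).
  apply: theta_eq_sum => m; apply: theta_eqM; apply: theta_eq_theta.
    exact: theta_derivable_T.
  exact: theta_derivable_S.
case: j => [|j].
  apply: (theta_eq_open_ext U_open U_e (f := fun _ _ => 0)); last exact: theta_eq_cst.
  by move=> x y Uxy; rewrite (Tmat_mul (mom_gb Uxy).1).
apply: (theta_eq_open_ext U_open U_e (f := fun x y => Sm x y p j)).
  by move=> x y Uxy; rewrite (Tmat_mul (mom_gb Uxy).1).
exact/theta_eq_theta/theta_derivable_S.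
Qed.

Lemma theta_T_superdiag p : dT p p.+1 = 0.
Proof.
apply/esym/theta_eqE.
apply: (theta_eq_open_ext U_open U_e (f := fun _ _ => 1)); last exact: theta_eq_cst.
by move=> x y Uxy; rewrite (Tmat_superdiag (mom_gb Uxy).1).
Qed.

Let s_lower : lower_unitriangular s := (mom_gb U_e).1.
Let sM_upper := gauss_borel_upper (mom_gb U_e).
Let M_shift k j : M e1 e2 k j.+2 = M e1 e2 k.+1 j.
Proof. by rewrite /moment /= negbK !addnS. Qed.

Lemma theta_rec_alpha n : theta_eq (fun x y => rec_alpha (Sm x y) n) e1 e2
  (rec_beta s n.+1 - rec_beta s n).
Proof.
have := theta_eq_theta (theta_derivable_T n n).
rewrite (@dT_diag _ _ _ (fun p k => dS p k) (fun p m => dT p m) s_lower sM_upper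
  (mom_det U_e) theta_S_upper theta_SM_upper theta_TS theta_T_superdiag).
by case: n.
Qed.

Lemma theta_rec_beta n : theta_eq (fun x y => rec_beta (Sm x y) n.+1) e1 e2
  (rec_gamma s n.+2 - rec_gamma s n.+1
   + rec_beta s n.+1 * (rec_alpha s n.+1 - rec_alpha s n)).
Proof.
have := theta_eq_theta (theta_derivable_T n.+1 n).
rewrite (@dT_sub1 _ _ _ (fun p k => dS p k) (fun p m => dT p m) s_lower sM_upper
  (mom_det U_e) theta_S_upper theta_SM_upper theta_TS theta_T_superdiag).
by rewrite rec_gammaSS; case: n => [|n] //; rewrite rec_gammaSS.
Qed.

Lemma theta_rec_gamma n : theta_eq (fun x y => rec_gamma (Sm x y) n.+2) e1 e2
  (rec_gamma s n.+2 * (rec_alpha s n.+2 - rec_alpha s n)).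
Proof.
have := theta_eq_theta (theta_derivable_T n.+2 n).
rewrite (@dT_sub2 _ _ _ (fun p k => dS p k) (fun p m => dT p m) s_lower sM_upper
  M_shift (mom_det U_e) theta_S_upper theta_SM_upper theta_TS theta_T_superdiag).
rewrite -rec_gammaSS.
by under eq2_fun do rewrite -rec_gammaSS.
Qed.

End TodaFlow.

Theorem mainTheorem13 (R : realType) (b1 b2 cs : seq R) (U : set (R * R))
  (Sm St : R -> R -> nat -> nat -> R) (H : R -> R -> nat -> R) :
  (forall c, c \in cs -> forall m : nat, c != - m%:R) ->
  open U ->
  (forall e1 e2, U (e1, e2) -> forall p : nat,
     cvgn (series (mom_term b1 cs e1 p)) /\ cvgn (series (mom_term b2 cs e2 p))) ->
  (forall e1 e2, U (e1, e2) -> forall N : nat,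
     \det (lead_block (moment b1 b2 cs e1 e2) N) != 0) ->
  (forall e1 e2, U (e1, e2) ->
     gauss_borel (moment b1 b2 cs e1 e2) (Sm e1 e2) (St e1 e2) (H e1 e2)) ->
  forall e1 e2, U (e1, e2) -> forall n : nat,
    [/\ theta_eq (fun x y => rec_alpha (Sm x y) n) e1 e2
          (rec_beta (Sm e1 e2) n.+1 - rec_beta (Sm e1 e2) n),
        theta_eq (fun x y => rec_beta (Sm x y) n.+1) e1 e2
          (rec_gamma (Sm e1 e2) n.+2 - rec_gamma (Sm e1 e2) n.+1
           + rec_beta (Sm e1 e2) n.+1
             * (rec_alpha (Sm e1 e2) n.+1 - rec_alpha (Sm e1 e2) n))
      & theta_eq (fun x y => rec_gamma (Sm x y) n.+2) e1 e2
          (rec_gamma (Sm e1 e2) n.+2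
           * (rec_alpha (Sm e1 e2) n.+2 - rec_alpha (Sm e1 e2) n))].
Proof.
(* The condition on [cs] only keeps the weights meaningful; the proof uses the
   convergence of the moment series instead. *)
move=> _ U_open mom_cvg mom_det mom_gb e1 e2 U_e n.
split; [exact: (theta_rec_alpha U_open mom_cvg mom_det mom_gb U_e)
      | exact: (theta_rec_beta U_open mom_cvg mom_det mom_gb U_e)
      | exact: (theta_rec_gamma U_open mom_cvg mom_det mom_gb U_e)].
Qed.
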